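(* Let $\mathcal I'$ be an SMI instance and $a$ an agent of $\mathcal I'$. Then there is at most one agent $a'$ with $a'\notin \mathrm{ma}(\mathcal I')$ and $a'\in\mathrm{ma}(\mathcal I'\setminus\{a\})$.
   Context: In a Stable Marriage with Incomplete Lists (SMI) instance there are men $U$ and women $W$, and each agent has a strict preference list over a subset of the agents of opposite gender; $m,w$ are mutually acceptable if each appears in the other's list. A matching is a set of mutually acceptable man–woman pairs in which each agent appears at most once. A mutually acceptable pair $\{m,w\}$ blocks a matching $M$ if ($m$ is unassigned or prefers $w$ to his partner) and ($w$ is unassigned or prefers $m$ to her partner); $M$ is stable if no pair blocks it. By the Rural Hospitals Theorem all stable matchings of an SMI instance assign the same set of agents; $\mathrm{ma}(\mathcal I)$ denotes this set of agents matched in the stable matchings of $\mathcal I$. $\mathcal I'\setminus\{a\}$ is the SMI instance obtained by deleting agent $a$ (and removing it from all lists). *)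

From mathcomp Require Import all_boot.
Set Implicit Arguments. Unset Strict Implicit. Unset Printing Implicit Defensive.

(* An SMI instance over men U and women W: each man has a strict preference
   list (a duplicate-free sequence, most preferred first) over a subset of W,
   and each woman one over a subset of U. *)
Record SMI (U W : finType) := mkSMI {
  mpref : U -> seq W;
  wpref : W -> seq U
}.

Section SMIDefs.
Variables (U W : finType).
Implicit Types (I : SMI U W) (m : U) (w : W).

Definition wf_SMI I : Prop :=
  (forall m, uniq (mpref I m)) /\ (forall w, uniq (wpref I w)).

Definition agent := (U + W)%type.

Definition acceptable I m w : bool := (w \in mpref I m) && (m \in wpref I w).

Definition mprefers I m w1 w2 : bool := index w1 (mpref I m) < index w2 (mpref I m).
Definition wprefers I w m1 m2 : bool := index m1 (wpref I w) < index m2 (wpref I w).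

Definition is_matching I (M : {set U * W}) : Prop :=
  (forall p, p \in M -> acceptable I p.1 p.2) /\
  (forall m w1 w2, (m, w1) \in M -> (m, w2) \in M -> w1 = w2) /\
  (forall w m1 m2, (m1, w) \in M -> (m2, w) \in M -> m1 = m2).

Definition man_matched (M : {set U * W}) m : Prop := exists w, (m, w) \in M.
Definition woman_matched (M : {set U * W}) w : Prop := exists m, (m, w) \in M.

Definition blocks I (M : {set U * W}) m w : Prop :=
  acceptable I m w /\
  (~ man_matched M m \/ exists w', (m, w') \in M /\ mprefers I m w w') /\
  (~ woman_matched M w \/ exists m', (m', w) \in M /\ wprefers I w m m').

Definition stable I (M : {set U * W}) : Prop :=
  is_matching I M /\ forall m w, ~ blocks I M m w.

Definition agent_matched (M : {set U * W}) (x : agent) : Prop :=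
  match x with inl m => man_matched M m | inr w => woman_matched M w end.

(* ma(I): agents matched in the stable matchings of I (by the Rural Hospitals
   Theorem, equivalently in some / in every stable matching). *)
Definition ma I (x : agent) : Prop :=
  exists M, stable I M /\ agent_matched M x.

(* The deleted agent is
   kept in the carrier type but with an empty list and appearing in no list,
   so it is in no matching (equivalent to being absent). *)
Definition del_agent I (a : agent) : SMI U W :=
  match a with
  | inl m0 => mkSMI (fun m => if m == m0 then [::] else mpref I m)
                    (fun w => filter (predC1 m0) (wpref I w))
  | inr w0 => mkSMI (fun m => filter (predC1 w0) (mpref I m))
                    (fun w => if w == w0 then [::] else wpref I w)
  end.

End SMIDefs.

From mathcomp Require Import all_boot zify.
Set Implicit Arguments. Unset Strict Implicit. Unset Printing Implicit Defensive.

(* We work in a one-sided encoding: every agent x has a list L x of agents,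
   and a matching is a symmetric partial "partner" function P.  For two
   stable partner functions P1 (for L) and P2 (for L with a deleted), the
   alternating walk x0 -P2-> x1 -P1-> x2 -P2-> ... is deterministic in both
   directions, because partners are unique.
   If a1, a2 are newly matched (witnessed by stable M1, M2 of I \ {a}), then
   a2 is matched in M1 too (a is isolated in I \ {a}, so step 3 applied
   there is impossible), and the walks from a1 and a2 with respect to a
   stable M of I and M1 both end at a, hence a1 = a2. *)

Section Preferences.
Variable T : eqType.
Implicit Types (L : T -> seq T) (P : T -> option T) (a x y z : T).

Definition accL L x y := (y \in L x) && (x \in L y).
Definition prefL L x y z := index y (L x) < index z (L x).
Definition want L P x y := if P x is Some z then prefL L x y z else true.

Definition stable_partner L P : Prop :=
  [/\ forall x y, P x = Some y -> P y = Some x,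
      forall x y, P x = Some y -> accL L x y &
      forall x y, accL L x y -> want L P x y -> ~~ want L P y x].

Lemma stable_partner_ext L L' P : L =1 L' -> stable_partner L P -> stable_partner L' P.
Proof.
move=> eL; have eacc x y : accL L x y = accL L' x y by rewrite /accL !eL.
have ewant x y : want L P x y = want L' P x y.
  by rewrite /want; case: (P x) => // z; rewrite /prefL eL.
case=> Psym Pacc Pblock; split=> // x y; first by rewrite -eacc; apply: Pacc.
by rewrite -eacc -!ewant; apply: Pblock.
Qed.

Lemma index_inj (s : seq T) x y : x \in s -> y \in s -> index x s = index y s -> x = y.
Proof. by move=> hx hy e; rewrite -(nth_index x hx) -(nth_index x hy) e. Qed.

Lemma prefL_total L x y z :
  y \in L x -> z \in L x -> y != z -> ~~ prefL L x y z -> prefL L x z y.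
Proof.
move=> yL zL yz; rewrite /prefL -leqNgt leq_eqVlt => /orP[/eqP E|//].
by move: yz; rewrite (index_inj zL yL E) eqxx.
Qed.

Lemma stable_reject L P x y : stable_partner L P -> accL L x y -> want L P x y ->
  exists2 z, P y = Some z & prefL L y z x.
Proof.
case=> Psym Pacc Pblock xy wxy; move: (Pblock _ _ xy wxy).
rewrite {1}/want; case Py: (P y) => [z|] // nyxz.
exists z => //; apply: prefL_total nyxz.
- by case/andP: xy.
- by case/andP: (Pacc _ _ Py).
- apply: contraTneq wxy => xz.
  by rewrite /want (Psym y x); [rewrite /prefL ltnn | rewrite Py xz].
Qed.

Definition del_list a L x := if x == a then [::] else filter (predC1 a) (L x).

Lemma mem_del a L x y : (y \in del_list a L x) = [&& x != a, y != a & y \in L x].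
Proof. by rewrite /del_list; case: eqP => //= _; rewrite mem_filter. Qed.

Lemma del_listK a L : del_list a (del_list a L) =1 del_list a L.
Proof. by move=> x; rewrite /del_list; case: eqP => // _; rewrite filter_id. Qed.

Lemma acc_del a L x y : accL (del_list a L) x y = [&& x != a, y != a & accL L x y].
Proof.
rewrite /accL !mem_del.
by case: (x != a); case: (y != a); rewrite //= ?andbF.
Qed.

Lemma index_filter_lt (p : pred T) s y z : p y -> p z ->
  (index y (filter p s) < index z (filter p s)) = (index y s < index z s).
Proof.
move=> py pz; elim: s => [|v s IH] //=.
have [pv|npv] := boolP (p v); rewrite /= /index /= -/(index y s) -/(index z s).
- rewrite -/(index y _) -/(index z _).
  by case: (v == y); case: (v == z) => //=; rewrite ltnS IH.
- have [vy vz] : (v == y) = false /\ (v == z) = false.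
    by split; apply/negbTE; apply: contraNneq npv => ->.
  by rewrite vy vz ltnS.
Qed.

Lemma pref_del a L x y z : x != a -> y != a -> z != a ->
  prefL (del_list a L) x y z = prefL L x y z.
Proof. by move=> /negbTE xa ya za; rewrite /prefL /del_list xa index_filter_lt. Qed.

End Preferences.

Section AlternatingWalk.
Variables (T : finType) (P1 P2 : T -> option T).
Hypothesis P1sym : forall x y, P1 x = Some y -> P1 y = Some x.
Hypothesis P2sym : forall x y, P2 x = Some y -> P2 y = Some x.

Definition sel q := if odd q then P2 else P1.

(* The alternating walk from x0; it stays put where no partner exists. *)
Fixpoint walk x0 q := if q is q'.+1 then odflt (walk x0 q') (sel q (walk x0 q')) else x0.

Definition valid x0 n := forall q, q < n -> sel q.+1 (walk x0 q) = Some (walk x0 q.+1).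

Lemma valid_ext x0 n z : valid x0 n -> sel n.+1 (walk x0 n) = Some z ->
  valid x0 n.+1 /\ walk x0 n.+1 = z.
Proof.
move=> V E; have wz : walk x0 n.+1 = z by rewrite /= E.
split=> // q; rewrite ltnS leq_eqVlt => /orP[/eqP->|]; [by rewrite E wz | exact: V].
Qed.

Lemma valid_le x0 m n : m <= n -> valid x0 n -> valid x0 m.
Proof. by move=> mn V q qm; apply: V; apply: leq_trans mn. Qed.

Lemma walk_back x0 n q : valid x0 n -> q < n ->
  sel q.+1 (walk x0 q.+1) = Some (walk x0 q).
Proof. by move=> V /V; rewrite /sel; case: ifP => _; [apply: P2sym | apply: P1sym]. Qed.

Lemma walk_agree x1 x2 i j t : valid x1 (i + t) -> valid x2 (j + t) ->
  odd i = odd j -> walk x1 (i + t) = walk x2 (j + t) -> walk x1 i = walk x2 j.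
Proof.
elim: t i j => [|t IH] i j V1 V2 ij; first by rewrite !addn0.
rewrite -!addSnnS => E; rewrite -!addSnnS in V1 V2.
have E' : walk x1 i.+1 = walk x2 j.+1 by apply: IH => //=; rewrite ij.
have B1 := walk_back V1 (leq_addr t i.+1).
have B2 := walk_back V2 (leq_addr t j.+1).
by move: B1; rewrite E' /sel /= ij -/(sel j.+1) B2 => -[].
Qed.

(* A walk from a P1-unmatched agent cannot be extended backwards, so it is
   determined by its endpoint and length parity. *)
Lemma walk_origin_unique x1 x2 k d : valid x1 k -> valid x2 (d + k) -> ~~ odd d ->
  walk x1 k = walk x2 (d + k) -> P1 x1 = None -> d = 0 /\ x1 = x2.
Proof.
move=> V1 V2 ed E N1.
have x1d : x1 = walk x2 d.
  by apply: (@walk_agree x1 x2 0 d k); rewrite ?add0n //= (negbTE ed).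
case: d => [|d] in V2 ed E x1d *; first by [].
have := walk_back V2 (leq_addr k d.+1).
by rewrite /sel (negbTE ed) -x1d N1.
Qed.

Lemma walk_uniq x1 x2 k1 k2 : valid x1 k1 -> valid x2 k2 -> ~~ odd k1 -> ~~ odd k2 ->
  walk x1 k1 = walk x2 k2 -> P1 x1 = None -> P1 x2 = None -> x1 = x2.
Proof.
wlog le12 : x1 x2 k1 k2 / k1 <= k2.
  move=> H V1 V2 e1 e2 E N1 N2; have [le|/ltnW le] := leqP k1 k2.
    exact: H le V1 V2 e1 e2 E N1 N2.
  exact/esym/(H _ _ _ _ le V2 V1 e2 e1 (esym E) N2 N1).
move=> V1 V2 e1 e2 E N1 _; rewrite -(subnK le12) in V2 E.
apply: (walk_origin_unique V1 V2 _ E N1).2.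
by rewrite oddB // (negbTE e1) (negbTE e2).
Qed.

Variable side : T -> bool.
Hypothesis P1side : forall x y, P1 x = Some y -> side y = ~~ side x.
Hypothesis P2side : forall x y, P2 x = Some y -> side y = ~~ side x.

Lemma walk_side x0 n q : valid x0 n -> q <= n -> side (walk x0 q) = side x0 (+) odd q.
Proof.
move=> V; elim: q => [|q IH] qn; first by rewrite addbF.
have sel_side x y : sel q.+1 x = Some y -> side y = ~~ side x.
  by rewrite /sel; case: ifP => _; [apply: P2side | apply: P1side].
by rewrite (sel_side _ _ (V q qn)) IH ?(ltnW qn) //= addbN.
Qed.

Lemma walk_inj x0 n i j : valid x0 n -> P1 x0 = None -> i <= n -> j <= n ->
  walk x0 i = walk x0 j -> i = j.
Proof.
wlog le_ij : i j / i <= j.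
  move=> H V N ilen jlen E; have [le|/ltnW le] := leqP i j.
    exact: H le V N ilen jlen E.
  exact/esym/(H _ _ le V N jlen ilen (esym E)).
move=> V N ilen jlen E.
have pij : odd i = odd j.
  have := walk_side V ilen; have := walk_side V jlen; rewrite E => ->.
  by case: (side x0); case: (odd i); case: (odd j).
have ed : ~~ odd (j - i) by rewrite oddB // pij addbb.
rewrite -(subnK le_ij) in E jlen.
have [d0 _] := walk_origin_unique (valid_le ilen V) (valid_le jlen V) ed E N.
by rewrite -(subnK le_ij) d0.
Qed.

Lemma walk_bound x0 n : valid x0 n -> P1 x0 = None -> n < #|T|.
Proof.
move=> V N; pose f (i : 'I_n.+1) := walk x0 i.
have f_inj : injective f.
  by move=> i j /(walk_inj V N (leq_ord i) (leq_ord j)) /val_inj.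
by have := leq_card _ f_inj; rewrite card_ord.
Qed.

End AlternatingWalk.
Arguments walk : simpl never.

Section DeletionChain.
Variables (T : finType) (side : T -> bool) (L : T -> seq T) (a : T).
Variables (P1 P2 : T -> option T).
Hypothesis Lside : forall x y, y \in L x -> side y = ~~ side x.
Hypothesis P1stable : stable_partner L P1.
Hypothesis P2stable : stable_partner (del_list a L) P2.
Variable x0 : T.
Hypothesis x0_free : P1 x0 = None.
Hypothesis x0_matched : P2 x0 <> None.

Notation w := (walk P1 P2 x0).
Notation valid := (valid P1 P2 x0).

Definition chain_inv p := [/\ valid p.+1, ~~ odd p & want L P1 (w p) (w p.+1)].

(* Stability of P1 forces a P1-edge out of w p.+1; unless it reaches a,
   stability of P2 forces the next P2-edge, which restores the invariant. *)
Lemma chain_step p : chain_inv p -> chain_inv p.+2 \/ (valid p.+2 /\ w p.+2 = a).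
Proof.
case=> Vp ep wp; have [P1sym P1acc _] := P1stable; have [P2sym P2acc _] := P2stable.
have Pxy : P2 (w p) = Some (w p.+1) by have := Vp p (ltnSn p); rewrite /sel /= (negbTE ep).
have := P2acc _ _ Pxy; rewrite acc_del => /and3P[xa ya acc1].
have [z Pyz pz] := stable_reject P1stable acc1 wp.
have [Vp2 wz] : valid p.+2 /\ w p.+2 = z.
  by apply: valid_ext Vp _; rewrite /sel /= negbK (negbTE ep).
have [za|za] := eqVneq z a; [by right; rewrite wz | left].
have acc2 : accL (del_list a L) (w p.+1) z by rewrite acc_del ya za P1acc.
have want2 : want (del_list a L) P2 (w p.+1) z by rewrite /want (P2sym _ _ Pxy) pref_del.
have [u Pzu pu] := stable_reject P2stable acc2 want2.
have := P2acc _ _ Pzu; rewrite acc_del => /and3P[_ ua _].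
have [Vp3 wu] : valid p.+3 /\ w p.+3 = u.
  by apply: valid_ext Vp2 _; rewrite wz /sel /= negbK (negbTE ep).
split=> //; first by rewrite /= negbK.
by rewrite /want wz wu (P1sym _ _ Pyz) -(pref_del L za) ?pu.
Qed.

(* Since the walk cannot grow forever, it reaches a after an even number of steps. *)
Lemma deletion_chain : exists k, [/\ valid k, ~~ odd k & w k = a].
Proof.
have [P1sym P1acc _] := P1stable; have [P2sym P2acc _] := P2stable.
have inv0 : chain_inv 0.
  case P0: (P2 x0) x0_matched => [y|] // _.
  have [V1 _] : valid 1 /\ w 1 = y by apply: valid_ext.
  by split=> //; rewrite /want x0_free.
have inv_or_done i : chain_inv i.*2 \/ exists k, [/\ valid k, ~~ odd k & w k = a].
  elim: i => [|i [inv|done]]; [by left | | by right].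
  have [inv'|[Vk wk]] := chain_step inv; [by left; rewrite doubleS | right].
  by exists i.*2.+2; rewrite /= negbK odd_double.
have [[V _ _]|//] := inv_or_done #|T|.
have side1 x y : P1 x = Some y -> side y = ~~ side x.
  by move/P1acc/andP => [/Lside].
have side2 x y : P2 x = Some y -> side y = ~~ side x.
  by move/P2acc/andP => []; rewrite mem_del => /and3P[_ _ /Lside].
have := walk_bound P1sym P2sym side1 side2 V x0_free; lia.
Qed.

End DeletionChain.

(* In an instance where a is already isolated, an agent unmatched in one
   stable partner function is unmatched in all of them: otherwise the
   deletion chain would give a a partner. *)
Lemma isolated_unmatched (T : finType) (side : T -> bool) (L : T -> seq T) (a : T)
    (P1 P2 : T -> option T) x :
  (forall u v, v \in L u -> side v = ~~ side u) ->
  stable_partner (del_list a L) P1 -> stable_partner (del_list a L) P2 ->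
  P1 x = None -> P2 x = None.
Proof.
move=> Lside st1 st2 x_free; case P2x: (P2 x) => [y|] //; exfalso.
have x_matched : P2 x <> None by rewrite P2x.
have dside u v : v \in del_list a L u -> side v = ~~ side u.
  by rewrite mem_del => /and3P[_ _ /Lside].
have st2' := stable_partner_ext (fun u => esym (del_listK a L u)) st2.
have [[|k] [V ek wk]] := deletion_chain dside st1 st2' x_free x_matched.
- have [_ P2acc _] := st2; have xa : x = a := wk.
  by move: (P2acc _ _ P2x); rewrite xa acc_del eqxx.
- have [P1sym P1acc _] := st1; have [P2sym _ _] := st2.
  have := walk_back P1sym P2sym V (ltnSn k); rewrite wk /sel (negbTE ek).
  by move/P1acc; rewrite acc_del eqxx.
Qed.

Section SMIEncoding.
Variables (U W : finType).
Implicit Types (I : SMI U W) (M : {set U * W}) (m : U) (w : W) (x y : agent U W).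

Definition is_man x : bool := if x is inl _ then true else false.

Definition prefl I x : seq (agent U W) :=
  match x with inl m => map inr (mpref I m) | inr w => map inl (wpref I w) end.

Definition partner M x : option (agent U W) :=
  match x with
  | inl m => omap inr [pick w | (m, w) \in M]
  | inr w => omap inl [pick m | (m, w) \in M]
  end.

Lemma prefl_side I x y : y \in prefl I x -> is_man y = ~~ is_man x.
Proof. by case: x => [m|w] /mapP[z _ ->]. Qed.

Lemma prefl_del I a : prefl (del_agent I a) =1 del_list a (prefl I).
Proof.
move=> x; rewrite /del_list; case: a => [m0|w0]; case: x => [m|w] /=.
- case: (eqVneq m m0) => [->|ne]; rewrite ?eqxx // (inj_eq inl_inj) (negbTE ne).
  by rewrite filter_map; congr map; apply/esym/all_filterP/allP.
- by rewrite filter_map; congr map; apply: eq_filter => y /=; rewrite (inj_eq inl_inj).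
- by rewrite filter_map; congr map; apply: eq_filter => y /=; rewrite (inj_eq inr_inj).
- case: (eqVneq w w0) => [->|ne]; rewrite ?eqxx // (inj_eq inr_inj) (negbTE ne).
  by rewrite filter_map; congr map; apply/esym/all_filterP/allP.
Qed.

Lemma acc_man_woman I m w : accL (prefl I) (inl m) (inr w) = acceptable I m w.
Proof. by rewrite /accL /= (mem_map inr_inj) (mem_map inl_inj). Qed.

Lemma acc_woman_man I m w : accL (prefl I) (inr w) (inl m) = acceptable I m w.
Proof. by rewrite /accL /= (mem_map inr_inj) (mem_map inl_inj) andbC. Qed.

Lemma acc_same_side I x y : is_man x = is_man y -> accL (prefl I) x y = false.
Proof.
by case: x => [m|w]; case: y => [m'|w'] // _; apply/negbTE/nandP; left;
  apply/negP => /mapP[].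
Qed.

Lemma partner_man M m z : partner M (inl m) = Some z -> exists2 w, z = inr w & (m, w) \in M.
Proof. by rewrite /=; case: pickP => // w Mw [<-]; exists w. Qed.

Lemma partner_woman M w z : partner M (inr w) = Some z -> exists2 m, z = inl m & (m, w) \in M.
Proof. by rewrite /=; case: pickP => // m Mm [<-]; exists m. Qed.

Lemma matched_partner M x : agent_matched M x <-> partner M x <> None.
Proof.
case: x => [m|w] /=; (split; [case=> y My | case: pickP => // y My _]).
- by case: pickP => // /(_ y); rewrite My.
- by exists y.
- by case: pickP => // /(_ y); rewrite My.
- by exists y.
Qed.

Lemma want_man I M m w : want (prefl I) (partner M) (inl m) (inr w) ->
  ~ man_matched M m \/ exists w', (m, w') \in M /\ mprefers I m w w'.
Proof.
rewrite /want; case E: (partner M (inl m)) => [z|] p.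
- have [w' zw Mw'] := partner_man E; subst z; right; exists w'; split=> //.
  by move: p; rewrite /prefL /= !(index_map inr_inj).
- by left => mm; apply: (matched_partner M (inl m)).1 mm E.
Qed.

Lemma want_woman I M m w : want (prefl I) (partner M) (inr w) (inl m) ->
  ~ woman_matched M w \/ exists m', (m', w) \in M /\ wprefers I w m m'.
Proof.
rewrite /want; case E: (partner M (inr w)) => [z|] p.
- have [m' zm Mm'] := partner_woman E; subst z; right; exists m'; split=> //.
  by move: p; rewrite /prefL /= !(index_map inl_inj).
- by left => ww; apply: (matched_partner M (inr w)).1 ww E.
Qed.

Section Matching.
Variables (I : SMI U W) (M : {set U * W}).
Hypothesis M_matching : is_matching I M.

Lemma partnerL m w : (m, w) \in M -> partner M (inl m) = Some (inr w).
Proof.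
case: M_matching => _ [uniq_w _] Mmw /=.
case: pickP => [w' Mw'|/(_ w)]; last by rewrite Mmw.
by rewrite (uniq_w _ _ _ Mw' Mmw).
Qed.

Lemma partnerR m w : (m, w) \in M -> partner M (inr w) = Some (inl m).
Proof.
case: M_matching => _ [_ uniq_m] Mmw /=.
case: pickP => [m' Mm'|/(_ m)]; last by rewrite Mmw.
by rewrite (uniq_m _ _ _ Mm' Mmw).
Qed.

Lemma partner_sym x y : partner M x = Some y -> partner M y = Some x.
Proof.
case: x => [m|w]; [case/partner_man => w -> | case/partner_woman => m ->].
- exact: partnerR.
- exact: partnerL.
Qed.

Lemma partner_acc x y : partner M x = Some y -> accL (prefl I) x y.
Proof.
have [Macc _] := M_matching.
case: x => [m|w]; [case/partner_man => w -> | case/partner_woman => m ->] => /Macc.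
- by rewrite acc_man_woman.
- by rewrite acc_woman_man.
Qed.

End Matching.

Lemma partner_noblock I M x y : (forall m w, ~ blocks I M m w) ->
  accL (prefl I) x y -> want (prefl I) (partner M) x y -> ~~ want (prefl I) (partner M) y x.
Proof.
move=> noblock; case: x => [m|w]; case: y => [m'|w']; try by rewrite acc_same_side.
- rewrite acc_man_woman => ac h1; apply/negP => h2.
  by apply: (noblock m w'); split=> //; split; [exact: want_man|exact: want_woman].
- rewrite acc_woman_man => ac h1; apply/negP => h2.
  by apply: (noblock m' w); split=> //; split; [exact: want_man|exact: want_woman].
Qed.

Lemma stable_partnerP I M : stable I M -> stable_partner (prefl I) (partner M).
Proof.
case=> HM noblock; split=> x y.
- exact: (@partner_sym I M HM x y).
- exact: (@partner_acc I M HM x y).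
- exact: (@partner_noblock I M x y noblock).
Qed.

Lemma stable_del_partner I a M : stable (del_agent I a) M ->
  stable_partner (del_list a (prefl I)) (partner M).
Proof. by move/stable_partnerP; apply: stable_partner_ext; apply: prefl_del. Qed.

Lemma ma_partner I x : ma I x -> exists2 M, stable I M & partner M x <> None.
Proof. by case=> M [stM /matched_partner]; exists M. Qed.

Lemma not_ma_partner I M x : stable I M -> ~ ma I x -> partner M x = None.
Proof.
move=> stM xI; case E: (partner M x) => [y|] //; case: xI; exists M; split=> //.
by apply/matched_partner; rewrite E.
Qed.

End SMIEncoding.

(* Existence of a stable matching (Gale-Shapley, men proposing).  A state
   k : U -> nat says that man m currently proposes to the k m-th woman of
   his list; the invariant is that every woman a man has already passed
   holds a proposal she prefers to his. *)
Section GaleShapley.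
Variables (U W : finType) (I : SMI U W).
Hypothesis wf : wf_SMI I.
Implicit Type k : U -> nat.

Definition proposes k m w := (w \in mpref I m) && (index w (mpref I m) == k m).

Definition gs_inv k := forall m w, w \in mpref I m -> index w (mpref I m) < k m ->
  m \in wpref I w ->
  exists m', proposes k m' w /\ index m' (wpref I w) < index m (wpref I w).

Definition rejected k r w := proposes k r w && ((r \notin wpref I w) ||
  [exists p, proposes k p w && (index p (wpref I w) < index r (wpref I w))]).

(* Number of proposals still available, which decreases at each step. *)
Definition potential k := \sum_(m : U) (size (mpref I m) - k m).
Definition advance k r := fun m => if m == r then (k m).+1 else k m.

Lemma proposes_uniq k m w1 w2 : proposes k m w1 -> proposes k m w2 -> w1 = w2.
Proof. by case/andP=> h1 /eqP e1 /andP[h2 /eqP e2]; apply: (index_inj h1 h2); rewrite e1 e2. Qed.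

Lemma advance_inv k r w0 : gs_inv k -> rejected k r w0 -> gs_inv (advance k r).
Proof.
move=> Hk /andP[pr rj].
have keep p w : p != r -> proposes k p w -> proposes (advance k r) p w.
  by move=> /negbTE pr' /andP[h1 h2]; rewrite /proposes /advance pr' h1.
have better : r \in wpref I w0 ->
    exists2 p, proposes k p w0 & index p (wpref I w0) < index r (wpref I w0).
  by move=> rin; case/orP: rj => [/negP//|/existsP[p /andP[h1 h2]]]; exists p.
have neq p w : index p (wpref I w) < index r (wpref I w) -> p != r.
  by move=> lt; apply/eqP => e; rewrite e ltnn in lt.
move=> m w wm.
have transfer m' : proposes k m' w -> index m' (wpref I w) < index m (wpref I w) ->
    exists m'', proposes (advance k r) m'' w /\ index m'' (wpref I w) < index m (wpref I w).
  move=> pm' lt; have [e|ne] := eqVneq m' r; last by exists m'; split=> //; apply: keep.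
  subst m'; have ew := proposes_uniq pm' pr; subst w.
  have rin : r \in wpref I w0 by rewrite -index_mem (leq_trans lt (index_size _ _)).
  have [p pp lp] := better rin.
  by exists p; split; [apply: keep (neq _ _ lp) pp | exact: ltn_trans lp lt].
rewrite /advance; have [em|ne] := eqVneq m r => lt mw.
- subst m; rewrite ltnS leq_eqVlt in lt; case/orP: lt => [/eqP e|lt].
  + have ew : w = w0 by apply: proposes_uniq pr; rewrite /proposes wm e eqxx.
    subst w; have [p pp lp] := better mw.
    by exists p; split=> //; apply: keep (neq _ _ lp) pp.
  + by have [m' [pm' l']] := Hk _ _ wm lt mw; apply: transfer pm' l'.
- by have [m' [pm' l']] := Hk _ _ wm lt mw; apply: transfer pm' l'.
Qed.

Lemma potential_advance k r w0 : proposes k r w0 -> potential (advance k r) < potential k.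
Proof.
case/andP=> wr /eqP e; have lt : k r < size (mpref I r) by rewrite -e index_mem.
have E : \sum_(m | m != r) (size (mpref I m) - advance k r m) =
         \sum_(m | m != r) (size (mpref I m) - k m).
  by apply: eq_bigr => m /negbTE h; rewrite /advance h.
by rewrite /potential (bigD1 r) // [X in _ < X](bigD1 r) //= E /advance eqxx ltn_add2r; lia.
Qed.

Definition proposals k : {set U * W} := [set p | proposes k p.1 p.2].

Lemma in_proposals k m w : ((m, w) \in proposals k) = proposes k m w.
Proof. by rewrite inE. Qed.

Lemma held_proposal k m w : ~~ rejected k m w -> proposes k m w ->
  m \in wpref I w /\ forall p, proposes k p w -> index m (wpref I w) <= index p (wpref I w).
Proof.
rewrite /rejected => + pm; rewrite pm /= negb_or negbK => /andP[mw none]; split=> // p pp.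
by rewrite leqNgt; apply: contra none => lt; apply/existsP; exists p; rewrite pp lt.
Qed.

Lemma proposals_matching k : (forall r w, ~~ rejected k r w) -> is_matching I (proposals k).
Proof.
move=> Hn; split; last split.
- case=> m w; rewrite in_proposals /= => pm; rewrite /acceptable (held_proposal (Hn m w) pm).1.
  by case/andP: pm => ->.
- by move=> m w1 w2; rewrite !in_proposals; apply: proposes_uniq.
- move=> w m1 m2; rewrite !in_proposals => p1 p2.
  have [i1 le1] := held_proposal (Hn _ _) p1; have [i2 le2] := held_proposal (Hn _ _) p2.
  by apply: (index_inj i1 i2); apply/eqP; rewrite eqn_leq le1 ?le2.
Qed.

(* When no proposal is rejected, the current proposals form a stable matching:
   a man prefers w to his match only if w already holds a better proposal. *)
Lemma stable_of_no_rejection k : gs_inv k -> (forall r w, ~~ rejected k r w) ->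
  stable I (proposals k).
Proof.
move=> Hk Hn; have M_matching := proposals_matching Hn; split=> // m w.
case=> [/andP[wm mw] [hm hw]].
have passed : index w (mpref I m) < k m.
  case: hm => [nm|[w' [Mw' pr]]].
  - rewrite ltnNge; apply/negP => le; apply: nm.
    have ks : k m < size (mpref I m) by apply: leq_ltn_trans le _; rewrite index_mem.
    exists (nth w (mpref I m) (k m)); rewrite in_proposals /proposes mem_nth //.
    by rewrite /= index_uniq //; case: wf => ->.
  - by move: Mw' pr; rewrite in_proposals /mprefers => /andP[_ /eqP <-].
have [m' [pm' better]] := Hk _ _ wm passed mw.
case: hw => [nw|[m'' [Mm'' pr]]]; first by apply: nw; exists m'; rewrite in_proposals.
have [_ [_ one_man]] := M_matching.
have em : m'' = m' by apply: one_man Mm'' _; rewrite in_proposals.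
by subst m''; have := ltn_trans pr better; rewrite ltnn.
Qed.

Lemma gs_round k : gs_inv k ->
  (exists M, stable I M) \/ exists2 k', gs_inv k' & potential k' < potential k.
Proof.
move=> Hk; have [/existsP[r /existsP[w rw]] | none] := boolP [exists r, exists w, rejected k r w].
- right; exists (advance k r); first exact: advance_inv rw.
  exact: potential_advance (proj1 (andP rw)).
- left; exists (proposals k); apply: stable_of_no_rejection => // r w.
  by apply: contraNN none => h; apply/existsP; exists r; apply/existsP; exists w.
Qed.

Lemma stable_matching_exists : exists M, stable I M.
Proof.
suff run : forall n k, potential k < n -> gs_inv k -> exists M, stable I M.
  by apply: (run _ (fun _ => 0) (ltnSn _)) => m w _; rewrite ltn0.
elim=> [//|n IH] k; rewrite ltnS => pk Hk.
have [//|[k' Hk' lt]] := gs_round Hk.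
exact: IH (leq_trans lt pk) Hk'.
Qed.

End GaleShapley.

Theorem mainTheorem7 (U W : finType) (I : SMI U W) (a : agent U W) :
  wf_SMI I ->
  forall a1 a2 : agent U W,
    ~ ma I a1 -> ma (del_agent I a) a1 ->
    ~ ma I a2 -> ma (del_agent I a) a2 ->
    a1 = a2.
Proof.
move=> wf a1 a2 a1I a1J a2I a2J.
have [M stM] := stable_matching_exists wf.
have [M1 st1 a1M1] := ma_partner a1J.
have [M2 st2 a2M2] := ma_partner a2J.
have a1M := not_ma_partner stM a1I; have a2M := not_ma_partner stM a2I.
have stP := stable_partnerP stM.
have stQ1 := stable_del_partner st1; have stQ2 := stable_del_partner st2.
(* a is isolated in I \ {a}, so a2, matched in M2, is matched in M1 as well. *)
have a2M1 : partner M1 a2 <> None.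
  by move=> h; apply: a2M2; apply: (isolated_unmatched (@prefl_side _ _ I) stQ1 stQ2 h).
have [k1 [V1 e1 w1]] := deletion_chain (@prefl_side _ _ I) stP stQ1 a1M a1M1.
have [k2 [V2 e2 w2]] := deletion_chain (@prefl_side _ _ I) stP stQ1 a2M a2M1.
have [Psym _ _] := stP; have [Q1sym _ _] := stQ1.
by apply: (walk_uniq Psym Q1sym V1 V2 e1 e2) => //; rewrite w1 w2.
Qed.
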